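(* Let $(a_0,\ldots,a_n)$ be a finite sequence of positive integers. For every $\varepsilon>0$ there is $m_0>0$ such that for every integer $m\ge m_0$ and every positive integer $N$, $$\Phi^1(\beta^{N+1})-\Phi^1(\beta^N)<\frac{\varepsilon}{2}.$$
   Context: For positive integers $d_0,d_1,\ldots$, $[d_0,d_1,d_2,\ldots]$ denotes the continued fraction $\cfrac{1}{d_0+\cfrac{1}{d_1+\cfrac{1}{d_2+\cdots}}}$, and for $\beta=[d_0,d_1,\ldots]$ we write $\alpha_j(\beta)=[d_j,d_{j+1},\ldots]$. For integers $m\ge1$, $N\ge1$, $\beta^N$ is the number whose digits (indexed from $0$) are $a_0,\ldots,a_n$ in positions $0,\ldots,n$, $N$ in position $n+m$, and $1$ in all other positions. For such $\beta$ (with $m$ fixed), $\Phi^1(\beta)=\alpha_0(\beta)\alpha_1(\beta)\cdots\alpha_{n+m-1}(\beta)\log\frac{1}{\alpha_{n+m}(\beta)}$. *)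

From Stdlib Require Import Reals Lra Lia Arith.
From Coquelicot Require Import Coquelicot.
Open Scope R_scope.

Fixpoint cf_fin (d : nat -> nat) (k : nat) : R :=
  match k with
  | O => 0
  | S k' => / (INR (d O) + cf_fin (fun i => d (S i)) k')
  end.

Definition cf (d : nat -> nat) : R := real (Lim_seq (fun k => cf_fin d k)).

Definition alpha (j : nat) (d : nat -> nat) : R := cf (fun i => d (i + j)%nat).

(* Digits of beta^N: a_0..a_n at positions 0..n, N at position n+m, 1 elsewhere. *)
Definition beta_digits (n : nat) (a : nat -> nat) (m N : nat) (i : nat) : nat :=
  if Nat.leb i n then a i
  else if Nat.eqb i (n + m) then N else 1%nat.

Fixpoint prod_alpha (d : nat -> nat) (k : nat) : R :=
  match k with
  | O => 1
  | S k' => prod_alpha d k' * alpha k' d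
  end.

Definition Phi1 (n m : nat) (d : nat -> nat) : R :=
  prod_alpha d (n + m) * ln (/ alpha (n + m) d).

From Stdlib Require Import Reals Lra Lia.
From Coquelicot Require Import Coquelicot.
Open Scope R_scope.

(* Beyond position [n + m] the digits of [beta^N] are [N, 1, 1, ...], so
   [alpha_{n+m}(beta^N) = 1 / (N + g)] with [g = [1, 1, ...]], while the first
   [n + m] digits do not depend on [N].  The classical identity
   [alpha_0 ... alpha_{k-1} = 1 / (q_k + alpha_k q_{k-1})], with [q] the
   continuants of the common prefix, then gives
   [Phi^1(beta^N) = ln B / (q + c / B)] with [B = N + g] and [0 <= c <= q].
   Passing from [B] to [B + 1] increases this by at most [2 / q], and
   [q = q_{n+m} >= n + m >= m]. *)

Definition positive_digits (d : nat -> nat) : Prop := forall i, (0 < d i)%nat.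

Lemma positive_digits_tail (d : nat -> nat) :
  positive_digits d -> positive_digits (fun i => d (S i)).
Proof. intros Hd i; apply Hd. Qed.

Lemma positive_digits_shift (d : nat -> nat) (k : nat) :
  positive_digits d -> positive_digits (fun i => d (i + k)%nat).
Proof. intros Hd i; apply Hd. Qed.

Lemma positive_digit_ge1 (d : nat -> nat) (i : nat) :
  positive_digits d -> 1 <= INR (d i).
Proof. intros Hd; apply (le_INR 1), Hd. Qed.

Lemma cf_fin_ext (d e : nat -> nat) (k : nat) :
  (forall i, d i = e i) -> cf_fin d k = cf_fin e k.
Proof.
  revert d e; induction k as [|k IH]; intros d e Hde; simpl; [reflexivity|].
  rewrite (Hde O), (IH (fun i => d (S i)) (fun i => e (S i))); auto.
Qed.

Lemma cf_ext (d e : nat -> nat) : (forall i, d i = e i) -> cf d = cf e.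
Proof.
  intros Hde; unfold cf; f_equal.
  apply Lim_seq_ext; intros k; apply cf_fin_ext, Hde.
Qed.

Fixpoint cf_tail (d : nat -> nat) (k : nat) (x : R) : R :=
  match k with
  | O => x
  | S k' => / (INR (d O) + cf_tail (fun i => d (S i)) k' x)
  end.

Lemma cf_fin_tail (d : nat -> nat) (k : nat) : cf_fin d k = cf_tail d k 0.
Proof.
  revert d; induction k as [|k IH]; intros d; simpl; [reflexivity|].
  rewrite IH; reflexivity.
Qed.

Lemma cf_tail_add (d : nat -> nat) (k j : nat) (x : R) :
  cf_tail d (k + j) x = cf_tail d k (cf_tail (fun i => d (k + i)%nat) j x).
Proof.
  revert d; induction k as [|k IH]; intros d; simpl; [reflexivity|].
  rewrite IH; reflexivity.
Qed.

Lemma cf_tail_S_r (d : nat -> nat) (k : nat) (x : R) :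
  cf_tail d (S k) x = cf_tail d k (/ (INR (d k) + x)).
Proof.
  rewrite <- Nat.add_1_r, cf_tail_add; simpl.
  rewrite Nat.add_0_r; reflexivity.
Qed.

Lemma inv_digit_range (d : nat -> nat) (k : nat) (x : R) :
  positive_digits d -> 0 <= x -> 0 < / (INR (d k) + x) <= 1.
Proof.
  intros Hd Hx; pose proof (positive_digit_ge1 d k Hd).
  split; [apply Rinv_0_lt_compat; lra|].
  rewrite <- Rinv_1; apply Rinv_le_contravar; lra.
Qed.

Lemma cf_tail_range (d : nat -> nat) (k : nat) (x : R) :
  positive_digits d -> 0 <= x <= 1 -> 0 <= cf_tail d k x <= 1.
Proof.
  intros Hd; revert x; induction k as [|k IH]; intros x Hx; [exact Hx|].
  rewrite cf_tail_S_r; apply IH.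
  pose proof (inv_digit_range d k x Hd (proj1 Hx)); lra.
Qed.

(* [cf_den d (S k)] is the denominator [q_k] of the convergent
   [[d_0, ..., d_{k-1}]]; the shift makes [cf_den d 0 = q_{-1} = 0]. *)
Fixpoint cf_den (d : nat -> nat) (k : nat) : R :=
  match k with
  | O => 0
  | S O => 1
  | S (S j as k') => INR (d j) * cf_den d k' + cf_den d j
  end.

Lemma cf_den_SS (d : nat -> nat) (k : nat) :
  cf_den d (S (S k)) = INR (d k) * cf_den d (S k) + cf_den d k.
Proof. reflexivity. Qed.

Lemma cf_den_bounds (d : nat -> nat) (k : nat) : positive_digits d ->
  0 <= cf_den d k <= cf_den d (S k) /\ 1 <= cf_den d (S k) /\
  INR k + 1 <= cf_den d (S k) + cf_den d k.
Proof.
  intros Hd; induction k as [|k IH]; [simpl; lra|].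
  destruct IH as ([H0 Hmono] & H1 & Hsum).
  rewrite cf_den_SS, S_INR.
  pose proof (positive_digit_ge1 d k Hd).
  nra.
Qed.

Lemma cf_den_ge_index (d : nat -> nat) (k : nat) :
  positive_digits d -> INR k <= cf_den d (S k).
Proof.
  intros Hd; destruct k as [|k]; [simpl; lra|].
  rewrite cf_den_SS, S_INR.
  destruct (cf_den_bounds d k Hd) as ([H0 _] & H1 & Hsum).
  pose proof (positive_digit_ge1 d k Hd).
  nra.
Qed.

Lemma cf_den_ext_below (d e : nat -> nat) (k : nat) :
  (forall i, (i < k)%nat -> d i = e i) ->
  cf_den d k = cf_den e k /\ cf_den d (S k) = cf_den e (S k).
Proof.
  induction k as [|k IH]; intros Hde; [split; reflexivity|].
  destruct IH as [Hk HSk]; [intros i Hi; apply Hde; lia|].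
  split; [exact HSk|].
  rewrite !cf_den_SS, Hk, HSk, (Hde k); [reflexivity | lia].
Qed.

Lemma cf_tail_sub (d : nat -> nat) (k : nat) (x y : R) :
  positive_digits d -> 0 <= x -> 0 <= y ->
  cf_tail d k x - cf_tail d k y =
  (-1) ^ k * (x - y) /
  ((cf_den d (S k) + x * cf_den d k) * (cf_den d (S k) + y * cf_den d k)).
Proof.
  intros Hd; revert x y; induction k as [|k IH]; intros x y Hx Hy.
  - simpl; field.
  - rewrite !cf_tail_S_r, IH, cf_den_SS
      by (apply Rlt_le, inv_digit_range; assumption).
    pose proof (positive_digit_ge1 d k Hd).
    destruct (cf_den_bounds d k Hd) as ([H0 _] & H1 & _).
    simpl pow; field; repeat split; nra.
Qed.

Lemma cf_fin_dist_le (d : nat -> nat) (k j : nat) :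
  positive_digits d -> Rabs (cf_fin d (k + j) - cf_fin d k) <= / cf_den d (S k).
Proof.
  intros Hd.
  rewrite !cf_fin_tail, cf_tail_add.
  set (y := cf_tail _ j 0).
  assert (Hy : 0 <= y <= 1) by (apply cf_tail_range; [intros i; apply Hd | lra]).
  rewrite cf_tail_sub by (auto; lra).
  destruct (cf_den_bounds d k Hd) as ([H0 _] & H1 & _).
  set (q := cf_den d (S k)) in *; set (r := cf_den d k) in *.
  rewrite Rmult_0_l, Rplus_0_r, Rminus_0_r.
  unfold Rdiv; rewrite !Rabs_mult, pow_1_abs, Rabs_inv, (Rabs_pos_eq y),
    (Rabs_pos_eq ((q + y * r) * q)), Rinv_mult by (try apply Rmult_le_pos; nra).
  assert (Hyq : y * / (q + y * r) <= 1).
  { apply (Rmult_le_reg_r (q + y * r)); [nra|].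
    rewrite Rmult_assoc, Rinv_l; nra. }
  pose proof (Rinv_0_lt_compat q ltac:(lra)).
  nra.
Qed.

Lemma is_lim_seq_cf (d : nat -> nat) :
  positive_digits d -> is_lim_seq (cf_fin d) (cf d).
Proof.
  intros Hd.
  assert (Hcauchy : ex_lim_seq_cauchy (cf_fin d)).
  { intros eps.
    destruct (INR_archimed eps 2 (cond_pos eps)) as [M HM].
    exists M; intros i j Hi Hj.
    replace i with (M + (i - M))%nat by lia; replace j with (M + (j - M))%nat by lia.
    pose proof (cf_fin_dist_le d M (i - M) Hd) as Hi'.
    pose proof (cf_fin_dist_le d M (j - M) Hd) as Hj'.
    pose proof (cf_den_ge_index d M Hd).
    destruct (cf_den_bounds d M Hd) as (_ & H1 & _).
    assert (Hsmall : 2 * / cf_den d (S M) < eps).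
    { apply (Rmult_lt_reg_r (cf_den d (S M))); [lra|].
      rewrite Rmult_assoc, Rinv_l by lra.
      pose proof (cond_pos eps); nra. }
    eapply Rle_lt_trans; [|exact Hsmall].
    replace (cf_fin d (M + (i - M)) - cf_fin d (M + (j - M))) with
      ((cf_fin d (M + (i - M)) - cf_fin d M) - (cf_fin d (M + (j - M)) - cf_fin d M))
      by ring.
    eapply Rle_trans; [apply Rabs_triang|].
    rewrite Rabs_Ropp; lra. }
  apply ex_lim_seq_cauchy_corr in Hcauchy as [l Hl].
  unfold cf; rewrite (is_lim_seq_unique (fun k => cf_fin d k) _ Hl); exact Hl.
Qed.

Lemma cf_range (d : nat -> nat) : positive_digits d -> 0 <= cf d <= 1.
Proof.
  intros Hd.
  assert (Hfin : forall k, 0 <= cf_fin d k <= 1).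
  { intros k; rewrite cf_fin_tail; apply cf_tail_range; [exact Hd | lra]. }
  split.
  - apply (is_lim_seq_le (fun _ => 0) (cf_fin d) 0 (cf d));
      [apply Hfin | apply is_lim_seq_const | apply is_lim_seq_cf, Hd].
  - apply (is_lim_seq_le (cf_fin d) (fun _ => 1) (cf d) 1);
      [apply Hfin | apply is_lim_seq_cf, Hd | apply is_lim_seq_const].
Qed.

Lemma cf_cons (d : nat -> nat) :
  positive_digits d -> cf d = / (INR (d O) + cf (fun i => d (S i))).
Proof.
  intros Hd.
  pose proof (positive_digit_ge1 d O Hd).
  pose proof (cf_range _ (positive_digits_tail d Hd)) as Htail.
  assert (Hlim : is_lim_seq (fun k => cf_fin d (S k))
                   (/ (INR (d O) + cf (fun i => d (S i))))).
  { apply (is_lim_seq_inv (fun k => INR (d O) + cf_fin (fun i => d (S i)) k)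
             (INR (d O) + cf (fun i => d (S i)))).
    - apply (is_lim_seq_plus' (fun _ => INR (d O))); [apply is_lim_seq_const|].
      apply is_lim_seq_cf, positive_digits_tail, Hd.
    - intros Heq; injection Heq; lra. }
  apply is_lim_seq_incr_1 in Hlim.
  apply (is_lim_seq_unique _ _) in Hlim.
  rewrite (is_lim_seq_unique _ _ (is_lim_seq_cf d Hd)) in Hlim.
  injection Hlim; auto.
Qed.

Lemma alpha_S (d : nat -> nat) (k : nat) :
  positive_digits d -> alpha k d = / (INR (d k) + alpha (S k) d).
Proof.
  intros Hd; unfold alpha.
  rewrite cf_cons by (apply positive_digits_shift, Hd).
  do 2 f_equal; apply cf_ext; intros i; f_equal; lia.
Qed.

Lemma prod_alpha_cf_den (d : nat -> nat) (k : nat) : positive_digits d ->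
  prod_alpha d k = / (cf_den d (S k) + alpha k d * cf_den d k).
Proof.
  intros Hd; induction k as [|k IH].
  - simpl; rewrite Rmult_0_r, Rplus_0_r, Rinv_1; reflexivity.
  - simpl prod_alpha; rewrite IH, cf_den_SS, (alpha_S d k Hd).
    pose proof (positive_digit_ge1 d k Hd).
    pose proof (cf_range _ (positive_digits_shift d (S k) Hd)) as Hrange.
    destruct (cf_den_bounds d k Hd) as ([H0 _] & H1 & _).
    unfold alpha in *; field; split; nra.
Qed.

Lemma ln_le_sub1 (t : R) : 0 < t -> ln t <= t - 1.
Proof.
  intros Ht; pose proof (exp_ineq1_le (ln t)) as H.
  rewrite exp_ln in H; lra.
Qed.

Lemma inv_affine_ln_step (q c B : R) : 0 < q -> 0 <= c <= q -> 1 <= B ->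
  / (q + / (B + 1) * c) * ln (B + 1) - / (q + / B * c) * ln B <= 2 / q.
Proof.
  intros Hq Hc HB.
  assert (HlnB : 0 <= ln B) by (rewrite <- ln_1; apply ln_le; lra).
  assert (HlnA : ln (B + 1) <= ln B + / B).
  { replace (B + 1) with (B * (1 + / B)) by (field; lra).
    rewrite ln_mult by (try apply Rplus_lt_0_compat, Rinv_0_lt_compat; lra).
    pose proof (ln_le_sub1 (1 + / B) ltac:(apply Rplus_lt_0_compat, Rinv_0_lt_compat; lra)).
    lra. }
  assert (HinvB : 0 < / B <= 1)
    by (split; [apply Rinv_0_lt_compat | rewrite <- Rinv_1; apply Rinv_le_contravar]; lra).
  assert (HlnA_B : / B * ln (B + 1) <= 1).
  { pose proof (ln_le_sub1 (B + 1) ltac:(lra)).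
    replace 1 with (/ B * B) at 2 by (field; lra).
    apply Rmult_le_compat_l; lra. }
  assert (HinvA : 0 < / (B + 1) <= 1)
    by (split; [apply Rinv_0_lt_compat | rewrite <- Rinv_1; apply Rinv_le_contravar]; lra).
  set (u := q + / (B + 1) * c); set (v := q + / B * c).
  assert (Hu : q <= u) by (unfold u; nra); assert (Hv : q <= v) by (unfold v; nra).
  assert (Hnum : ln (B + 1) * v - ln B * u <= 2 * q).
  { unfold u, v.
    assert (0 <= c * / (B + 1) * ln B) by (apply Rmult_le_pos; [apply Rmult_le_pos|]; lra).
    assert (c * (/ B * ln (B + 1)) <= c) by nra.
    assert (q * / B <= q) by nra.
    nra. }
  assert (Huv : q * q <= u * v) by nra.
  replace (/ u * ln (B + 1) - / v * ln B) with ((ln (B + 1) * v - ln B * u) / (u * v))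
    by (field; lra).
  apply Rle_trans with (2 * q / (u * v)).
  - apply Rmult_le_compat_r; [apply Rlt_le, Rinv_0_lt_compat; nra | exact Hnum].
  - apply (Rmult_le_reg_r (u * v * q)); [apply Rmult_lt_0_compat; nra|].
    replace (2 * q / (u * v) * (u * v * q)) with (2 * q * q) by (field; lra).
    replace (2 / q * (u * v * q)) with (2 * (u * v)) by (field; lra).
    nra.
Qed.

Lemma beta_digits_below (n : nat) (a : nat -> nat) (m N N' i : nat) :
  (i < n + m)%nat -> beta_digits n a m N i = beta_digits n a m N' i.
Proof.
  intros Hi; unfold beta_digits.
  destruct (Nat.leb i n); [reflexivity|].
  destruct (Nat.eqb_spec i (n + m)); [lia | reflexivity].
Qed.

Section BetaDigits.

Variables (n : nat) (a : nat -> nat) (m : nat).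
Hypothesis a_pos : forall i, (i <= n)%nat -> (0 < a i)%nat.
Hypothesis m_pos : (0 < m)%nat.

Lemma beta_digits_positive (N : nat) :
  (0 < N)%nat -> positive_digits (beta_digits n a m N).
Proof.
  intros HN i; unfold beta_digits.
  destruct (Nat.leb_spec i n); [apply a_pos; lia|].
  destruct (Nat.eqb i (n + m)); lia.
Qed.

Lemma alpha_beta_digits (N : nat) : (0 < N)%nat ->
  alpha (n + m) (beta_digits n a m N) = / (INR N + cf (fun _ => 1%nat)).
Proof.
  intros HN.
  rewrite alpha_S by (apply beta_digits_positive, HN).
  unfold alpha, beta_digits; do 2 f_equal.
  - destruct (Nat.leb_spec (n + m) n); [lia|].
    rewrite Nat.eqb_refl; reflexivity.
  - apply cf_ext; intros i.
    destruct (Nat.leb_spec (i + S (n + m)) n); [lia|].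
    destruct (Nat.eqb_spec (i + S (n + m)) (n + m)); [lia | reflexivity].
Qed.

Lemma Phi1_beta_digits (N : nat) : (0 < N)%nat ->
  let b := beta_digits n a m N in
  let B := INR N + cf (fun _ => 1%nat) in
  Phi1 n m b = / (cf_den b (S (n + m)) + / B * cf_den b (n + m)) * ln B.
Proof.
  intros HN b B; unfold Phi1.
  rewrite prod_alpha_cf_den by (apply beta_digits_positive, HN).
  unfold b; rewrite alpha_beta_digits, Rinv_inv by exact HN.
  reflexivity.
Qed.

End BetaDigits.

Theorem mainTheorem8 (n : nat) (a : nat -> nat) :
  (forall i : nat, (i <= n)%nat -> (0 < a i)%nat) ->
  forall eps : R, 0 < eps ->
  exists m0 : nat, (0 < m0)%nat /\
    forall m N : nat, (m0 <= m)%nat -> (0 < N)%nat ->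
      Phi1 n m (beta_digits n a m (S N)) - Phi1 n m (beta_digits n a m N) < eps / 2.
Proof.
  intros Ha eps Heps.
  destruct (INR_archimed eps 4 Heps) as [M HM].
  exists (S M); split; [lia|].
  intros m N Hm HN.
  rewrite !Phi1_beta_digits by (auto; lia).
  set (b := beta_digits n a m N); set (g := cf (fun _ => 1%nat)).
  assert (Hprefix : forall i, (i < n + m)%nat -> beta_digits n a m (S N) i = b i)
    by (intros i Hi; apply beta_digits_below; exact Hi).
  destruct (cf_den_ext_below _ _ _ Hprefix) as [-> ->].
  assert (Hb : positive_digits b) by (apply beta_digits_positive; auto; lia).
  destruct (cf_den_bounds b (n + m) Hb) as ([Hc0 Hcq] & Hq1 & _).
  assert (HMq : INR M < cf_den b (S (n + m))).
  { apply Rlt_le_trans with (INR (n + m)); [apply lt_INR; lia|].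
    apply cf_den_ge_index, Hb. }
  assert (Hg : 0 <= g) by (apply cf_range; intros i; lia).
  assert (HN1 : 1 <= INR N) by (apply (le_INR 1); exact HN).
  replace (INR (S N) + g) with ((INR N + g) + 1) by (rewrite S_INR; ring).
  eapply Rle_lt_trans; [apply inv_affine_ln_step; lra|].
  set (q := cf_den b (S (n + m))) in *.
  apply (Rmult_lt_reg_r (2 * q)); [lra|].
  replace (2 / q * (2 * q)) with 4 by (field; lra).
  nra.
Qed.
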